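(* Let $\mathcal{C}$ be a category and $J$ a directed partially ordered set. Every inverse system $\boldsymbol{X}$ in $\mathcal{C}$ is isomorphic in $pro^J$-$\mathcal{C}$ to a cofinite inverse system $\boldsymbol{X}'$ (i.e. one whose index set is cofinite).
   Context: An inverse system $\boldsymbol{X}=(X_\lambda,p_{\lambda\lambda'},\Lambda)$ in $\mathcal{C}$: $\Lambda$ directed preordered, morphisms $p_{\lambda\lambda'}:X_{\lambda'}\to X_\lambda$ for $\lambda\le\lambda'$, $p_{\lambda\lambda}=1$, $p_{\lambda\lambda'}p_{\lambda'\lambda''}=p_{\lambda\lambda''}$. A directed set is cofinite if each element has finitely many predecessors. A $J$-morphism $(f,f^j_\mu):\boldsymbol{X}\to\boldsymbol{Y}=(Y_\mu,q_{\mu\mu'},M)$: $f:M\to\Lambda$ and $\mathcal{C}$-morphisms $f^j_\mu:X_{f(\mu)}\to Y_\mu$ ($\mu\in M$, $j\in J$) such that for all $\mu\le\mu'$ there exist $\lambda\ge f(\mu),f(\mu')$ and $j_0$ with $f^{j'}_\mu p_{f(\mu)\lambda}=q_{\mu\mu'}f^{j'}_{\mu'}p_{f(\mu')\lambda}$ for all $j'\ge j_0$. Composition $(g,g^j_\nu)(f,f^j_\mu)=(fg,g^j_\nu f^j_{g(\nu)})$, identity $(1_\Lambda,1_{X_\lambda})$. $(f,f^j_\mu)\sim(f',f'^j_\mu)$ iff for every $\mu$ there exist $\lambda\ge f(\mu),f'(\mu)$ and $j_0$ with $f^{j'}_\mu p_{f(\mu)\lambda}=f'^{j'}_\mu p_{f'(\mu)\lambda}$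 for all $j'\ge j_0$. $pro^J$-$\mathcal{C}$ is the resulting quotient category. *)

From Stdlib Require Import List.
Set Implicit Arguments.

(* A (locally small or not) category. [comp g f] is g o f. *)
Record Category := {
  Ob : Type;
  Hom : Ob -> Ob -> Type;
  comp : forall a b c : Ob, Hom b c -> Hom a b -> Hom a c;
  idm : forall a : Ob, Hom a a;
  comp_assoc : forall a b c d (h : Hom c d) (g : Hom b c) (f : Hom a b),
      comp h (comp g f) = comp (comp h g) f;
  comp_id_l : forall a b (f : Hom a b), comp (idm b) f = f;
  comp_id_r : forall a b (f : Hom a b), comp f (idm a) = f
}.
Arguments comp {_ _ _ _} _ _.
Arguments idm {_} _.

(* Directed sets are taken nonempty (standard convention). *)
Definition directed {I : Type} (le : I -> I -> Prop) : Prop :=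
  inhabited I /\ forall a b : I, exists c, le a c /\ le b c.

Record DirPoset := {
  Jt : Type;
  leJ : Jt -> Jt -> Prop;
  leJ_refl : forall j, leJ j j;
  leJ_trans : forall i j k, leJ i j -> leJ j k -> leJ i k;
  leJ_antisym : forall i j, leJ i j -> leJ j i -> i = j;
  leJ_directed : directed leJ
}.

Record InvSys (C : Category) := {
  Idx : Type;
  le : Idx -> Idx -> Prop;
  le_refl : forall l, le l l;
  le_trans : forall l l' l'', le l l' -> le l' l'' -> le l l'';
  le_directed : directed le;
  obj : Idx -> Ob C;
  bond : forall l l', le l l' -> Hom C (obj l') (obj l);
  bond_id : forall l (h : le l l), bond h = idm (obj l);
  bond_comp : forall l l' l'' (h1 : le l l') (h2 : le l' l'') (h3 : le l l''),
      comp (bond h1) (bond h2) = bond h3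
}.
Arguments Idx {C} _.
Arguments le {C} _ _ _.
Arguments obj {C} _ _.
Arguments bond {C} _ {_ _} _.

Definition cofinite {C : Category} (X : InvSys C) : Prop :=
  forall l : Idx X, exists s : list (Idx X), forall l', le X l' l -> In l' s.

(* Raw data of a J-morphism X -> Y: an index map f : M -> Lambda and
   morphisms f^j_mu : X_{f mu} -> Y_mu. *)
Record JData (C : Category) (J : DirPoset) (X Y : InvSys C) := {
  imap : Idx Y -> Idx X;
  cmp : Jt J -> forall mu : Idx Y, Hom C (obj X (imap mu)) (obj Y mu)
}.
Arguments imap {C J X Y} _ _.
Arguments cmp {C J X Y} _ _ _.

Definition is_Jmorphism {C : Category} {J : DirPoset} {X Y : InvSys C}
  (F : JData J X Y) : Prop :=
  forall (mu mu' : Idx Y) (h : le Y mu mu'),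
    exists (lam : Idx X) (h1 : le X (imap F mu) lam) (h2 : le X (imap F mu') lam)
           (j0 : Jt J),
      forall j', leJ J j0 j' ->
        comp (cmp F j' mu) (bond X h1) =
        comp (bond Y h) (comp (cmp F j' mu') (bond X h2)).

Definition Jcomp {C : Category} {J : DirPoset} {X Y Z : InvSys C}
  (G : JData J Y Z) (F : JData J X Y) : JData J X Z :=
  {| imap := fun nu => imap F (imap G nu);
     cmp := fun j nu => comp (cmp G j nu) (cmp F j (imap G nu)) |}.

Definition Jid {C : Category} (J : DirPoset) (X : InvSys C) : JData J X X :=
  {| imap := fun l => l; cmp := fun _ l => idm (obj X l) |}.

Definition Jequiv {C : Category} {J : DirPoset} {X Y : InvSys C}
  (F F' : JData J X Y) : Prop :=
  forall mu : Idx Y,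
    exists (lam : Idx X) (h1 : le X (imap F mu) lam) (h2 : le X (imap F' mu) lam)
           (j0 : Jt J),
      forall j', leJ J j0 j' ->
        comp (cmp F j' mu) (bond X h1) = comp (cmp F' j' mu) (bond X h2).

Definition iso_proJ {C : Category} (J : DirPoset) (X Y : InvSys C) : Prop :=
  exists (F : JData J X Y) (G : JData J Y X),
    is_Jmorphism F /\ is_Jmorphism G /\
    Jequiv (Jcomp G F) (Jid J X) /\ Jequiv (Jcomp F G) (Jid J Y).

(* Replace an index λ by a pair (λ, s), where the history s is a finite list
   of indices, keeping the term X_λ.  Pairs are ordered by the order of Λ on
   the first component and by the subsequence order on λ :: s; this order is
   still directed, and the predecessors of (λ, s) are read off the finitely
   many subsequences of λ :: s, so the new system is cofinite.  Forgetting the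
   history and adjoining an empty history are J-morphisms with identity
   components, inverse to each other up to ~. *)
From Stdlib Require Import List.
Import ListNotations.

Inductive sublist {A : Type} : list A -> list A -> Prop :=
| sublist_nil : sublist [] []
| sublist_skip x l l' : sublist l l' -> sublist l (x :: l')
| sublist_cons x l l' : sublist l l' -> sublist (x :: l) (x :: l').

Section Sublist.
Context {A : Type}.

Lemma sublist_nil_l (l : list A) : sublist [] l.
Proof. induction l; constructor; assumption. Qed.

Lemma sublist_refl (l : list A) : sublist l l.
Proof. induction l; constructor; assumption. Qed.

Lemma sublist_trans (a b c : list A) : sublist a b -> sublist b c -> sublist a c.
Proof.
  intros Hab Hbc; revert a Hab; induction Hbc; intros a Hab.
  - exact Hab.
  - apply sublist_skip; auto.
  - inversion Hab; subst; [apply sublist_skip | apply sublist_cons]; auto.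
Qed.

Lemma sublist_app_r (a b c : list A) : sublist a b -> sublist a (b ++ c).
Proof.
  intro H; induction H; simpl; [apply sublist_nil_l | constructor; assumption ..].
Qed.

Lemma sublist_app_l (a b c : list A) : sublist a b -> sublist a (c ++ b).
Proof. intro H; induction c; simpl; [assumption | apply sublist_skip; assumption]. Qed.

Fixpoint sublists (l : list A) : list (list A) :=
  match l with
  | [] => [[]]
  | x :: l => map (cons x) (sublists l) ++ sublists l
  end.

Lemma in_sublists (u l : list A) : sublist u l -> In u (sublists l).
Proof.
  intro H; induction H; simpl; auto.
  - apply in_or_app; right; assumption.
  - apply in_or_app; left; apply in_map; assumption.
Qed.

End Sublist.

Lemma bond_irrelevance {C : Category} (X : InvSys C) l l' (h h' : le X l l') :
  bond X h = bond X h'.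
Proof.
  rewrite <- (bond_comp X _ _ _ h (le_refl X l') h').
  rewrite bond_id, comp_id_r; reflexivity.
Qed.

Section UniformInJ.
Context {C : Category} {J : DirPoset} {X Y : InvSys C}.

Lemma is_Jmorphism_uniform (F : JData J X Y) :
  (forall (mu mu' : Idx Y) (h : le Y mu mu'),
     exists (lam : Idx X) (h1 : le X (imap F mu) lam) (h2 : le X (imap F mu') lam),
       forall j, comp (cmp F j mu) (bond X h1) =
                 comp (bond Y h) (comp (cmp F j mu') (bond X h2))) ->
  is_Jmorphism F.
Proof.
  intros HF mu mu' h; destruct (proj1 (leJ_directed J)) as [j0].
  destruct (HF mu mu' h) as (lam & h1 & h2 & Heq).
  exists lam, h1, h2, j0; intros j _; apply Heq.
Qed.

Lemma Jequiv_uniform (F F' : JData J X Y) :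
  (forall mu : Idx Y,
     exists (lam : Idx X) (h1 : le X (imap F mu) lam) (h2 : le X (imap F' mu) lam),
       forall j, comp (cmp F j mu) (bond X h1) = comp (cmp F' j mu) (bond X h2)) ->
  Jequiv F F'.
Proof.
  intros HF mu; destruct (proj1 (leJ_directed J)) as [j0].
  destruct (HF mu) as (lam & h1 & h2 & Heq).
  exists lam, h1, h2, j0; intros j _; apply Heq.
Qed.

End UniformInJ.

Section HistoryReindexing.
Context {C : Category} (X : InvSys C).

(* Lists with the subsequence order stand in for the finite subsets of the
   usual construction, which would need decidable equality on [Idx X]. *)
Definition hidx : Type := (Idx X * list (Idx X))%type.

Definition trace (a : hidx) : list (Idx X) := fst a :: snd a.

Definition hle (a b : hidx) : Prop :=
  sublist (trace a) (trace b) /\ le X (fst a) (fst b).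

Lemma hle_refl a : hle a a.
Proof. split; [apply sublist_refl | apply le_refl]. Qed.

Lemma hle_trans a b c : hle a b -> hle b c -> hle a c.
Proof.
  intros [Hab Lab] [Hbc Lbc].
  split; [eapply sublist_trans | eapply le_trans]; eassumption.
Qed.

Lemma hle_directed : directed hle.
Proof.
  destruct (le_directed X) as [[l0] Hdir]; split; [exact (inhabits (l0, [])) |].
  intros a b; destruct (Hdir (fst a) (fst b)) as (k & Ha & Hb).
  exists (k, trace a ++ trace b); split; split; try assumption; apply sublist_skip.
  - apply sublist_app_r, sublist_refl.
  - apply sublist_app_l, sublist_refl.
Qed.

Definition hbond {a b : hidx} (h : hle a b) : Hom C (obj X (fst b)) (obj X (fst a)) :=
  bond X (proj2 h).

Lemma hbond_id a (h : hle a a) : hbond h = idm _.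
Proof. apply bond_id. Qed.

Lemma hbond_comp a b c (h1 : hle a b) (h2 : hle b c) (h3 : hle a c) :
  comp (hbond h1) (hbond h2) = hbond h3.
Proof. apply bond_comp. Qed.

Definition history_system : InvSys C :=
  {| Idx := hidx; le := hle; le_refl := hle_refl; le_trans := hle_trans;
     le_directed := hle_directed; obj := fun a => obj X (fst a);
     bond := @hbond; bond_id := hbond_id; bond_comp := hbond_comp |}.

Lemma history_system_cofinite : cofinite history_system.
Proof.
  intros [n t]; exists (map (fun u => (hd n u, tl u)) (sublists (n :: t))).
  intros [m s] [Hsub _].
  exact (in_map (fun u => (hd n u, tl u)) _ _ (in_sublists _ _ Hsub)).
Qed.

Variable J : DirPoset.

Definition forget_history : JData J X history_system :=
  {| imap := fun a : Idx history_system => fst a; cmp := fun _ a => idm (obj X (fst a)) |}.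

Definition empty_history : JData J history_system X :=
  {| imap := fun l => (l, []) : Idx history_system; cmp := fun _ l => idm (obj X l) |}.

Lemma forget_history_Jmorphism : is_Jmorphism forget_history.
Proof.
  apply is_Jmorphism_uniform; intros a b h.
  exists (fst b), (proj2 h), (le_refl X (fst b)); intro j; simpl.
  unfold hbond; rewrite !comp_id_l, bond_id, comp_id_r; reflexivity.
Qed.

Lemma empty_history_Jmorphism : is_Jmorphism empty_history.
Proof.
  apply is_Jmorphism_uniform; intros l l' h.
  assert (h1 : hle (l, []) (l', [l])).
  { split; [apply sublist_skip, sublist_refl | exact h]. }
  assert (h2 : hle (l', []) (l', [l])).
  { split; [apply sublist_cons, sublist_nil_l | apply le_refl]. }
  exists (l', [l]), h1, h2; intro j; simpl.
  unfold hbond; rewrite !comp_id_l, bond_id, comp_id_r; apply bond_irrelevance.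
Qed.

Lemma empty_history_forget_history :
  Jequiv (Jcomp empty_history forget_history) (Jid J X).
Proof.
  apply Jequiv_uniform; intro l.
  exists l, (le_refl X l), (le_refl X l); intro j; simpl.
  rewrite comp_id_l; reflexivity.
Qed.

Lemma forget_history_empty_history :
  Jequiv (Jcomp forget_history empty_history) (Jid J history_system).
Proof.
  apply Jequiv_uniform; intros [m s].
  assert (h1 : hle (m, []) (m, s)).
  { split; [apply sublist_cons, sublist_nil_l | apply le_refl]. }
  exists (m, s), h1, (hle_refl (m, s)); intro j; simpl.
  rewrite !comp_id_l; apply bond_irrelevance.
Qed.

Lemma history_system_iso : iso_proJ J X history_system.
Proof.
  exists forget_history, empty_history.
  split; [exact forget_history_Jmorphism |].
  split; [exact empty_history_Jmorphism |].
  split; [exact empty_history_forget_history | exact forget_history_empty_history].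
Qed.

End HistoryReindexing.

Theorem corollary1 (C : Category) (J : DirPoset) (X : InvSys C) :
  exists X' : InvSys C, cofinite X' /\ iso_proJ J X X'.
Proof.
  exists (history_system X).
  split; [apply history_system_cofinite | apply history_system_iso].
Qed.
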